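(* Let $T:\mathcal P(\mathbb R^n)\to\mathcal P(\mathbb R^n)$ be given by $TA=\{y\in\mathbb R^n:\ \langle x,y\rangle\ge 1\ \forall x\in A\}$. Then the class $\mathcal C=\{TK:K\subseteq\mathbb R^n\}$ consists exactly of $\mathbb R^n$ together with all closed convex sets $K\subseteq\mathbb R^n$ such that $0\notin K$ and $\lambda K\subseteq K$ for all $\lambda\ge 1$.
   Context: $\mathcal P(\mathbb R^n)$ is the power set of $\mathbb R^n$ and $\langle\cdot,\cdot\rangle$ the standard inner product. *)

From HB Require Import structures.
From mathcomp Require Import all_boot all_order all_algebra.
From mathcomp Require Import all_classical all_reals all_analysis.
Set Implicit Arguments. Unset Strict Implicit. Unset Printing Implicit Defensive.
Import Order.TTheory GRing.Theory Num.Theory.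
Import numFieldNormedType.Exports.
Local Open Scope classical_set_scope.
Local Open Scope ring_scope.

Definition inner (R : realType) (n : nat) (x y : 'rV[R]_n) : R :=
  \sum_(i < n) x 0 i * y 0 i.

Definition polarT (R : realType) (n : nat) (A : set 'rV[R]_n) : set 'rV[R]_n :=
  [set y | forall x, A x -> 1 <= inner x y].

From HB Require Import structures.
From mathcomp Require Import all_boot all_order all_algebra.
From mathcomp Require Import all_classical all_reals all_analysis.
From mathcomp Require Import ring lra.
Import Order.TTheory GRing.Theory Num.Theory.
Import numFieldNormedType.Exports.
Local Open Scope classical_set_scope.
Local Open Scope ring_scope.
Set Implicit Arguments. Unset Strict Implicit.

(* A polar set T K is the intersection of the closed half-spaces
   {y | <x, y> >= 1}, x in K; hence it is closed, convex and stable under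
   dilations by l >= 1, and it misses 0 unless K is empty, when T K = R^n.
   Conversely such a set C equals T (T C).  A point y outside C is strictly
   separated from C by the hyperplane through its nearest point p in C, whose
   level <p, p - y> is nonnegative because 2p lies in C.  Separating 0 from C
   in the same way yields a functional with a positive level on C; adding a
   small multiple of it makes the level of the first one positive while y stays
   strictly separated, so the sum can be normalised to level 1, giving x in
   T C with <y, x> < 1. *)

Section InnerProduct.
Variables (R : realType) (n : nat).
Implicit Types x y z : 'rV[R]_n.

Lemma innerC x y : inner x y = inner y x.
Proof. by apply: eq_bigr => i _; rewrite mulrC. Qed.

Lemma innerDr x y z : inner x (y + z) = inner x y + inner x z.
Proof. by rewrite /inner -big_split; apply: eq_bigr => i _; rewrite mxE mulrDr. Qed.

Lemma innerZr x a y : inner x (a *: y) = a * inner x y.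
Proof. by rewrite /inner mulr_sumr; apply: eq_bigr => i _; rewrite mxE mulrCA. Qed.

Lemma innerNr x y : inner x (- y) = - inner x y.
Proof. by rewrite /inner -sumrN; apply: eq_bigr => i _; rewrite mxE mulrN. Qed.

Lemma innerDl x y z : inner (x + y) z = inner x z + inner y z.
Proof. by rewrite innerC innerDr !(innerC z). Qed.

Lemma innerZl a x y : inner (a *: x) y = a * inner x y.
Proof. by rewrite innerC innerZr innerC. Qed.

Lemma innerBl x y z : inner (x - y) z = inner x z - inner y z.
Proof. by rewrite innerC innerDr innerNr !(innerC z). Qed.

Lemma inner0l x : inner 0 x = 0.
Proof. by rewrite /inner big1 // => i _; rewrite mxE mul0r. Qed.

Lemma inner0r x : inner x 0 = 0.
Proof. by rewrite innerC inner0l. Qed.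

Lemma inner_self_ge0 x : 0 <= inner x x.
Proof. by apply: sumr_ge0 => i _; rewrite -expr2 sqr_ge0. Qed.

Lemma coord_sqr_le_inner x i : x 0 i ^+ 2 <= inner x x.
Proof.
rewrite /inner (bigD1 i) //= expr2 lerDl.
by apply: sumr_ge0 => j _; rewrite -expr2 sqr_ge0.
Qed.

Lemma inner_self_gt0 x : x != 0 -> 0 < inner x x.
Proof.
apply: contraNT; rewrite -leNgt => x_le0; apply/eqP/rowP => i; rewrite mxE.
apply/eqP; rewrite -sqrf_eq0 eq_le sqr_ge0 andbT.
exact: le_trans (coord_sqr_le_inner x i) x_le0.
Qed.

Lemma inner_self_DZ x y t :
  inner (x + t *: y) (x + t *: y) = inner x x + t * (2 * inner y x + t * inner y y).
Proof. by rewrite innerDl !innerDr !innerZl !innerZr (innerC x y); ring. Qed.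

Lemma continuous_inner (T : topologicalType) (f g : T -> 'rV[R]_n) :
  continuous f -> continuous g -> continuous (fun t => inner (f t) (g t)).
Proof.
move=> fc gc; rewrite /inner -fct_sumE.
apply: (big_ind (fun h : T -> R => continuous h)) => [t|h k hc kc t|i _ t].
- exact: cst_continuous.
- exact: (continuousD (hc t) (kc t)).
- have coord_comp (h : T -> 'rV[R]_n) : continuous h -> continuous (fun t => h t 0 i).
    move=> hc' s; apply: (@continuous_comp _ _ _ h (fun v : 'rV[R]_n => v 0 i)).
    + exact: hc'.
    + exact: coord_continuous.
  exact: continuousM (coord_comp f fc t) (coord_comp g gc t).
Qed.

End InnerProduct.

Lemma ge0_perturbation (R : realFieldType) (a b : R) : 0 <= b ->
  (forall t, 0 < t <= 1 -> 0 <= 2 * a + t * b) -> 0 <= a.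
Proof.
move=> b_ge0 ab_ge0; rewrite leNgt; apply/negP => a_lt0.
have ba_gt0 : 0 < b - a by lra.
pose t := - a / (b - a).
have tba : t * (b - a) = - a by rewrite divfK ?gt_eqF.
have t_gt0 : 0 < t by rewrite divr_gt0 ?oppr_gt0.
have t_le1 : t <= 1 by rewrite -(ler_pM2r ba_gt0) mul1r tba; lra.
have := ab_ge0 t; rewrite t_gt0 t_le1 => /(_ isT).
have : t * a < 0 by rewrite pmulr_rlt0.
nra.
Qed.

Section NearestPoint.
Variables (R : realType) (n : nat) (C : set 'rV[R]_n).
Hypothesis closedC : closed C.

Lemma exists_nearest y c0 : C c0 ->
  exists2 p, C p & forall c, C c -> inner (p - y) (p - y) <= inner (c - y) (c - y).
Proof.
move=> Cc0; pose f c := inner (c - y) (c - y); pose r := f c0 + 1.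
pose box := [set v : 'rV[R]_n | forall i, `[y 0 i - r, y 0 i + r]%classic (v 0 i)].
have box_compact : compact box.
  exact: (@rV_compact _ n (fun i => `[y 0 i - r, y 0 i + r]%classic)
    (fun i => @segment_compact _ _ _)).
have in_box c : f c <= f c0 -> box c.
  move=> fc i /=; rewrite in_itv /=.
  have := coord_sqr_le_inner (c - y) i; rewrite !mxE => c_y.
  have r_ge1 : 1 <= r by rewrite lerDr inner_self_ge0.
  have : (c 0 i - y 0 i) ^+ 2 < r ^+ 2.
    by apply: (le_lt_trans c_y); rewrite /r; move: fc; rewrite /f; nra.
  by rewrite !expr2 => sq_lt; apply/andP; split; nra.
have boxC_compact : compact (box `&` C) by exact: compact_closedI.
have boxC0 : (box `&` C) !=set0 by exists c0; split => //; exact: in_box.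
have f_cont : {within box `&` C, continuous f}.
  have sub_y : continuous (fun c : 'rV[R]_n => c - y).
    move=> c; apply: (@continuousB _ _ _ id (fun=> y)).
    + exact: cvg_id.
    + exact: cst_continuous.
  exact/continuous_subspaceT/continuous_inner.
have [p /set_mem [_ Cp] p_min] := EVT_min_rV boxC0 boxC_compact f_cont.
exists p => // c Cc; have [fc|/ltW fc] := leP (f c) (f c0).
  by apply: p_min; apply/mem_set; split => //; exact: in_box.
by apply: le_trans fc; apply: p_min; apply/mem_set; split => //; exact: in_box.
Qed.

Hypothesis convexC : convex_set C.

Lemma exists_projection y c0 : C c0 ->
  exists2 p, C p & forall c, C c -> 0 <= inner (c - p) (p - y).
Proof.
move=> Cc0; have [p Cp p_min] := exists_nearest y Cc0.
exists p => // c Cc; apply: (ge0_perturbation (inner_self_ge0 (c - p))).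
move=> t /andP[t_gt0 t_le1].
have Cct : C (p + t *: (c - p)).
  have := convexC (Itv01 (ltW t_gt0) t_le1) (mem_set Cc) (mem_set Cp); rewrite inE.
  by congr C; apply/rowP => j; rewrite !mxE /= /unstable.onem; ring.
have := p_min _ Cct.
have -> : p + t *: (c - p) - y = p - y + t *: (c - p) by rewrite addrAC.
by rewrite inner_self_DZ lerDl pmulr_rge0.
Qed.

End NearestPoint.

Lemma exists_separating_support (R : realType) (n : nat) (C : set 'rV[R]_n) y c0 :
  closed C -> convex_set C -> C c0 -> ~ C y ->
  exists a p, [/\ C p, forall c, C c -> inner p a <= inner c a & inner y a < inner p a].
Proof.
move=> closedC convexC Cc0 Cy.
have [p Cp p_proj] := exists_projection closedC convexC y Cc0.
exists (p - y), p; split => // [c /p_proj|]; first by rewrite innerBl subr_ge0.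
have p_neq_y : p - y != 0 by rewrite subr_eq0; apply/eqP => py; apply: Cy; rewrite -py.
have := inner_self_gt0 p_neq_y; rewrite [in X in 0 < X]innerBl; lra.
Qed.

Lemma polarT_separation (R : realType) (n : nat) (C : set 'rV[R]_n)
    (y a q : 'rV[R]_n) (b g : R) :
  0 <= b -> 0 < g -> (forall c, C c -> b <= inner c a) ->
  (forall c, C c -> g <= inner c q) -> inner y a < b ->
  exists2 x, polarT C x & inner y x < 1.
Proof.
move=> b_ge0 g_gt0 Ca Cq ya_lt.
pose s := inner y q - g.
pose eps := (b - inner y a) / (`|s| + 1).
have s1_gt0 : 0 < `|s| + 1 by rewrite ltr_wpDl.
have eps_gt0 : 0 < eps by rewrite divr_gt0 // subr_gt0.
have eps_s : eps * s < b - inner y a.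
  have : eps * (`|s| + 1) = b - inner y a by rewrite divfK ?gt_eqF.
  have : eps * s <= eps * `|s| by rewrite ler_pM2l // ler_norm.
  lra.
pose D := b + eps * g.
have D_gt0 : 0 < D by rewrite ltr_wpDl // mulr_gt0.
exists (D^-1 *: (a + eps *: q)) => [c Cc|].
  rewrite innerZr innerDr innerZr ler_pdivlMl // mulr1.
  have := Cq c Cc; rewrite -(ler_pM2l eps_gt0) /D; have := Ca c Cc; lra.
rewrite innerZr innerDr innerZr ltr_pdivrMl // mulr1.
move: eps_s; rewrite /D /s; lra.
Qed.

Section PolarT.
Variables (R : realType) (n : nat).
Implicit Types (K C : set 'rV[R]_n) (x y : 'rV[R]_n).

Lemma polarT_set0 : polarT (set0 : set 'rV[R]_n) = setT.
Proof. by apply/seteqP; split => // y _ x. Qed.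

Lemma polarT_closed K : closed (polarT K).
Proof.
have -> : polarT K = \bigcap_(x in K) (inner x @^-1` [set r | 1 <= r]) by [].
apply: closed_bigI => x _; apply: closed_comp => [v _|]; last exact: closed_ge.
apply: (@continuous_inner R n _ (fun=> x) id) => w; [exact: cst_continuous | exact: cvg_id].
Qed.

Lemma polarT_convex K : convex_set (polarT K).
Proof.
move=> y z l; rewrite !inE => Ky Kz x Kx /=.
rewrite innerDr !innerZr; have := Ky x Kx; have := Kz x Kx.
have : 0 <= l%:num <= 1 by apply/andP; split.
rewrite /unstable.onem; nra.
Qed.

Lemma polarT_not0 K : K !=set0 -> ~ polarT K 0.
Proof. by case=> x Kx /(_ x Kx); rewrite inner0r ler10. Qed.

Lemma polarT_scale K l y : 1 <= l -> polarT K y -> polarT K (l *: y).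
Proof. by move=> l_ge1 Ky x Kx; rewrite innerZr; have := Ky x Kx; nra. Qed.

Lemma sub_polarT_polarT C : C `<=` polarT (polarT C).
Proof. by move=> y Cy x Cx; rewrite innerC; apply: Cx. Qed.

Lemma polarT_polarT C : closed C -> convex_set C -> ~ C 0 ->
  (forall l y, 1 <= l -> C y -> C (l *: y)) -> polarT (polarT C) = C.
Proof.
move=> closedC convexC C0 C_scale.
apply/seteqP; split; last exact: sub_polarT_polarT.
move=> y TTCy; apply: contrapT => Cy.
have [[c0 Cc0]|C_empty] := pselect (C !=set0); last first.
  have : 1 <= inner 0 y by apply: TTCy => x Cx; case: C_empty; exists x.
  by rewrite inner0l ler10.
have [a [p [Cp pa_min ya_lt]]] := exists_separating_support closedC convexC Cc0 Cy.
have [q [p0 [_ p0q_min p0q_gt0]]] := exists_separating_support closedC convexC Cc0 C0.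
have pa_ge0 : 0 <= inner p a.
  by have := pa_min _ (C_scale 2 p (ler1n _ 2) Cp); rewrite innerZl; lra.
rewrite inner0l in p0q_gt0.
have [x TCx yx_lt1] := polarT_separation pa_ge0 p0q_gt0 pa_min p0q_min ya_lt.
by have := TTCy x TCx; rewrite innerC; lra.
Qed.

End PolarT.

Theorem lemma5p1 (R : realType) (n : nat) (C : set 'rV[R]_n) :
  (exists K : set 'rV[R]_n, C = polarT K) <->
  (C = setT \/
   (closed C /\ convex_set C /\ ~ C 0 /\
    (forall (l : R) (x : 'rV[R]_n), 1 <= l -> C x -> C (l *: x)))).
Proof.
split=> [[K ->]|[->|[closedC [convexC [C0 C_scale]]]]].
- have [->|/set0P K0] := eqVneq K set0; first by left; exact: polarT_set0.
  right; split; [exact: polarT_closed | split; [exact: polarT_convex | split]].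
  + exact: polarT_not0.
  + by move=> l x; exact: polarT_scale.
- by exists set0; rewrite polarT_set0.
- by exists (polarT C); rewrite polarT_polarT.
Qed.
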